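(* There exists a function $\beta:\mathbb{N}\times\mathbb{N}\to\mathbb{N}$ with the following property. Let $G=(A,B,E)$ be a bipartite graph with $A=\{\ell_1,\dots,\ell_m\}$, and let $\mathcal{P}=\{P_1,\dots,P_m\}$ be a partition of $B$ such that (1) for every $i\in[m]$, $P_i\subseteq N_G(\ell_i)$; and (2) for every $i\in[m]$, $N_G(\ell_i)\cap P_j=\emptyset$ for all $j<i$ and $N_G(\ell_i)\cap P_j\neq\emptyset$ for all $j>i$. Suppose further that $m>\beta(a,b)$ for some $a,b\in\mathbb{N}$. Then $G$ contains the half-graph $H_a$ of order $a$ as an induced subgraph, or $G$ contains a $1$-subdivision of $K_b$ as an induced subgraph in which all principal vertices are in $A$.
   Context: $[m]=\{1,\dots,m\}$. The half-graph $H_a$ of order $a$ has vertices $u_1,\dots,u_a,v_1,\dots,v_a$ and edges $u_iv_j$ for $1\le i\le j\le a$. A $1$-subdivision of $K_b$ is obtained from the complete graph $K_b$ by replacing each edge by a path with one internal vertex; the original $b$ vertices are the principal vertices. *)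

From mathcomp Require Import all_boot.
Set Implicit Arguments. Unset Strict Implicit. Unset Printing Implicit Defensive.

(* A simple graph is given by a finite vertex type and an adjacency relation.
   [induced_in eH eG] : the graph (VH, eH) is isomorphic to an induced
   subgraph of (VG, eG), witnessed by an injective map f. *)
Definition induced_by (VH VG : finType) (eH : rel VH) (eG : rel VG)
  (f : VH -> VG) : Prop :=
  injective f /\ forall x y, eG (f x) (f y) = eH x y.

(* Half-graph H_a: vertices u_1..u_a (inl) and v_1..v_a (inr),
   edges u_i v_j for i <= j (indices shifted to 0..a-1). *)
Definition half_graph (a : nat) : rel ('I_a + 'I_a) :=
  fun x y => match x, y with
  | inl i, inr j => (i <= j)%N
  | inr j, inl i => (i <= j)%N
  | _, _ => false
  end.

(* 1-subdivision of K_b: principal vertices 'I_b (inl), one subdivision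
   vertex for each pair {i,j} with i < j (inr), adjacent to i and j. *)
Definition subdiv_vertex (b : nat) := {p : 'I_b * 'I_b | (p.1 < p.2)%N}.

Definition subdiv_K (b : nat) : rel ('I_b + subdiv_vertex b) :=
  fun x y => match x, y with
  | inl i, inr s => (i == (val s).1) || (i == (val s).2)
  | inr s, inl i => (i == (val s).1) || (i == (val s).2)
  | _, _ => false
  end.

(* Bipartite graph G = (A, B, E) with A = {l_0, ..., l_(m-1)} = 'I_m;
   the vertex set is 'I_m + B and edges join inl i and inr b iff adj i b. *)
Definition bip_graph (m : nat) (B : finType) (adj : 'I_m -> B -> bool)
  : rel ('I_m + B) :=
  fun x y => match x, y with
  | inl i, inr b => adj i b
  | inr b, inl i => adj i b
  | _, _ => false
  end.

Definition is_inA (m : nat) (B : Type) (x : 'I_m + B) : bool :=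
  if x is inl _ then true else false.

Arguments half_graph a : clear implicits.
Arguments subdiv_K b : clear implicits.
Arguments subdiv_vertex b : clear implicits.

From mathcomp Require Import all_boot zify.
Set Implicit Arguments. Unset Strict Implicit. Unset Printing Implicit Defensive.

(* For i < j choose a vertex w(i,j) of P_j adjacent to l_i.  By (1) and (2),
   l_k is adjacent to w(i,j) when k is i or j and not adjacent when k > j; in
   the two remaining positions, k < i and i < k < j, adjacency 2-colours the
   triples of indices.  Ramsey's theorem for triples, applied once per colouring,
   yields a long run of indices on which both colours are constant.  Three of the
   four colour combinations give a half-graph between rungs l_k and witnesses
   w(i,j); in the last one l_k sees w(i,j) exactly when k is i or j, an induced
   1-subdivision of a clique with principal vertices l_k. *)

Section OrderedRamsey.
Variables (T : eqType) (lt : rel T).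
Hypotheses (lt_irr : irreflexive lt) (lt_trans : transitive lt).

Definition homog_pairs (d : T -> T -> bool) (col : bool) (S : seq T) :=
  {in S &, forall y z, lt y z -> d y z = col}.

Definition homog_triples (c : T -> T -> T -> bool) (col : bool) (S : seq T) :=
  {in S & S & S, forall x y z, lt x y -> lt y z -> c x y z = col}.

Lemma homog_pairs_subseq d col S U :
  subseq U S -> homog_pairs d col S -> homog_pairs d col U.
Proof. by move=> /mem_subseq sub dS y z /sub yS /sub zS; apply: dS. Qed.

Lemma homog_triples_subseq c col S U :
  subseq U S -> homog_triples c col S -> homog_triples c col U.
Proof. by move=> /mem_subseq sub cS x y z /sub xS /sub yS /sub zS; apply: cS. Qed.

Lemma path_lt_head x S : path lt x S -> {in S, forall y, lt x y && ~~ lt y x}.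
Proof.
move=> /(order_path_min lt_trans)/allP x_lt y /x_lt lt_xy; rewrite lt_xy.
by apply/negP => /(lt_trans lt_xy); rewrite lt_irr.
Qed.

Lemma homog_pairs_cons d col x S :
  path lt x S -> {in S, forall y, d x y = col} -> homog_pairs d col S ->
  homog_pairs d col (x :: S).
Proof.
move=> /path_lt_head x_lt dx dS y z.
rewrite !inE => /predU1P[->|yS] /predU1P[->|zS]; rewrite ?lt_irr //.
- by move=> _; apply: dx.
- by have /andP[_ /negbTE->] := x_lt y yS.
- exact: dS.
Qed.

Lemma homog_triples_cons c col x S :
  path lt x S -> homog_pairs (c x) col S -> homog_triples c col S ->
  homog_triples c col (x :: S).
Proof.
move=> /path_lt_head x_lt cx cS y z w.
rewrite !inE => /predU1P[->|yS] /predU1P[->|zS] /predU1P[->|wS];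
  rewrite ?lt_irr // => lt_yz lt_zw.
- by have /andP[_ /negP] := x_lt z zS.
- exact: cx.
- by have /andP[_ /negP] := x_lt y yS.
- by have /andP[_ /negP] := x_lt z zS.
- exact: cS.
Qed.

Lemma ramsey_pairs d s t S : sorted lt S -> 2 ^ (s + t) <= size S ->
  exists2 U, subseq U S &
    (s <= size U /\ homog_pairs d true U) \/ (t <= size U /\ homog_pairs d false U).
Proof.
have [n] := ubnP (s + t); elim: n s t S => // n IH [|s] [|t] S lt_st sortS sizeS;
  try by exists [::]; rewrite ?sub0seq //; (left + right); split=> // y z; rewrite in_nil.
case: S sortS sizeS => [|x S] /= sortS sizeS; first by rewrite leqNgt expn_gt0 in sizeS.
have sort_tail := path_sorted sortS.
have filter_sub (q : pred T) U : subseq U (filter q S) -> subseq U S.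
  by move=> subU; apply: subseq_trans subU (filter_subseq q S).
have cons_sub U : subseq U S -> subseq (x :: U) (x :: S) by move=> subU; rewrite /= eqxx.
have split_bound : 2 ^ (s.+1 + t.+1) = 2 ^ (s + t.+1) + 2 ^ (s.+1 + t).
  by rewrite addSn expnS mul2n -addnn addnS.
have [big|big] : 2 ^ (s + t.+1) <= count (d x) S \/ 2 ^ (s.+1 + t) <= count (predC (d x)) S.
  by move: sizeS; rewrite split_bound /= -(count_predC (d x) S); lia.
- have [U subU [[sizeU homU]|[sizeU homU]]] := IH s t.+1 (filter (d x) S)
    ltac:(lia) (sorted_filter lt_trans _ sort_tail) ltac:(by rewrite size_filter).
  + exists (x :: U); first exact: cons_sub (filter_sub _ _ subU).
    left; split=> //; apply: homog_pairs_cons => //.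
      exact: (subseq_path lt_trans (filter_sub _ _ subU) sortS).
    by move=> y /(mem_subseq subU); rewrite mem_filter => /andP[].
  + by exists U; [apply: subseq_trans (filter_sub _ _ subU) (subseq_cons S x) | right].
- have [U subU [[sizeU homU]|[sizeU homU]]] := IH s.+1 t (filter (predC (d x)) S)
    ltac:(lia) (sorted_filter lt_trans _ sort_tail) ltac:(by rewrite size_filter).
  + by exists U; [apply: subseq_trans (filter_sub _ _ subU) (subseq_cons S x) | left].
  + exists (x :: U); first exact: cons_sub (filter_sub _ _ subU).
    right; split=> //; apply: homog_pairs_cons => //.
      exact: (subseq_path lt_trans (filter_sub _ _ subU) sortS).
    by move=> y /(mem_subseq subU); rewrite mem_filter => /andP[] /negbTE.
Qed.

Fixpoint ramsey3_bound n :=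
  if n is n'.+1 then 2 ^ (ramsey3_bound n' + ramsey3_bound n') + 1 else 0.

Lemma ramsey_triples c n s t S :
  s + t <= n -> sorted lt S -> ramsey3_bound n <= size S ->
  exists2 U, subseq U S &
    (s <= size U /\ homog_triples c true U) \/ (t <= size U /\ homog_triples c false U).
Proof.
elim: n s t S => [|n IH] [|s] [|t] S // le_st sortS sizeS;
  try by exists [::]; rewrite ?sub0seq //; (left + right); split=> // y z w; rewrite in_nil.
case: S sortS sizeS => [|x S] /= sortS; rewrite addn1 ?ltnS // => sizeS.
have sort_tail := path_sorted sortS.
have cons_sub U : subseq U S -> subseq (x :: U) (x :: S) by move=> subU; rewrite /= eqxx.
have [V subV [[sizeV homV]|[sizeV homV]]] := ramsey_pairs (c x) sort_tail sizeS.
- have [U subU [[sizeU homU]|[sizeU homU]]] :=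
    IH s t.+1 V ltac:(lia) (subseq_sorted lt_trans subV sort_tail) sizeV.
  + exists (x :: U); first exact: cons_sub (subseq_trans subU subV).
    left; split=> //; apply: homog_triples_cons => //.
      exact: (subseq_path lt_trans (subseq_trans subU subV) sortS).
    exact: homog_pairs_subseq subU homV.
  + by exists U; [apply: subseq_trans (subseq_trans subU subV) (subseq_cons S x) | right].
- have [U subU [[sizeU homU]|[sizeU homU]]] :=
    IH s.+1 t V ltac:(lia) (subseq_sorted lt_trans subV sort_tail) sizeV.
  + by exists U; [apply: subseq_trans (subseq_trans subU subV) (subseq_cons S x) | left].
  + exists (x :: U); first exact: cons_sub (subseq_trans subU subV).
    right; split=> //; apply: homog_triples_cons => //.
      exact: (subseq_path lt_trans (subseq_trans subU subV) sortS).
    exact: homog_pairs_subseq subU homV.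
Qed.

Lemma ramsey_triples_diag c k S : sorted lt S -> ramsey3_bound k.*2 <= size S ->
  exists U col, [/\ subseq U S, k <= size U & homog_triples c col U].
Proof.
move=> sortS; rewrite -addnn => sizeS.
have [U subU [[sizeU homU]|[sizeU homU]]] := ramsey_triples c (leqnn _) sortS sizeS.
- by exists U, true.
- by exists U, false.
Qed.

End OrderedRamsey.

Definition sum_map (A1 A2 B1 B2 : Type) (g : A1 -> A2) (h : B1 -> B2)
  (x : A1 + B1) : A2 + B2 :=
  match x with inl a => inl (g a) | inr b => inr (h b) end.

Lemma induced_by_bip_graph m1 m2 (B1 B2 : finType) (adj1 : 'I_m1 -> B1 -> bool)
  (adj2 : 'I_m2 -> B2 -> bool) (g : 'I_m1 -> 'I_m2) (h : B1 -> B2) :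
  injective g -> injective h -> (forall i v, adj2 (g i) (h v) = adj1 i v) ->
  induced_by (bip_graph adj1) (bip_graph adj2) (sum_map g h).
Proof.
move=> g_inj h_inj gh; split; last by case=> [i|v] [j|w] /=.
by case=> [i|v] [j|w] //= [eq_gh]; rewrite ?(g_inj _ _ eq_gh) ?(h_inj _ _ eq_gh).
Qed.

Definition ladder_pattern (col1 col2 : bool) (k i j : nat) : bool :=
  [|| k == i, k == j | (k < j) && (if k < i then col1 else col2)].

Lemma ladder_pattern_mono col1 col2 (f : nat -> nat) (D : {pred nat}) :
  {in D &, {mono f : x y / x <= y}} ->
  {in D & D & D, forall k i j,
    ladder_pattern col1 col2 (f k) (f i) (f j) = ladder_pattern col1 col2 k i j}.
Proof.
move=> f_mono k i j kD iD jD.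
by rewrite /ladder_pattern !eqn_leq !f_mono // !(leqW_mono_in f_mono).
Qed.

Section InducedSubgraphs.
Variables (m : nat) (B : finType) (adj : 'I_m -> B -> bool).

Lemma induced_half_graph a (u : nat -> 'I_m) (w : nat -> B) :
  (forall i j, i < a -> j < a -> adj (u i) (w j) = (i <= j)) ->
  exists f, induced_by (half_graph a) (bip_graph adj) f.
Proof.
move=> uw; have {}uw (i j : 'I_a) : adj (u i) (w j) = (i <= j) by apply: uw.
exists (sum_map (u \o val) (w \o val)).
apply: (@induced_by_bip_graph _ _ _ _ (fun i j : 'I_a => i <= j)) => // i j /= eq_ij.
- apply/val_inj/eqP; rewrite eqn_leq.
  by rewrite -uw eq_ij uw leqnn -uw -eq_ij uw leqnn.
- apply/val_inj/eqP; rewrite eqn_leq.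
  by rewrite -uw -eq_ij uw leqnn -uw eq_ij uw leqnn.
Qed.

Lemma induced_subdiv b (u : nat -> 'I_m) (w : nat -> nat -> B) :
  {in [pred k | k < b] &, injective u} ->
  (forall k i j, k < b -> i < j < b -> adj (u k) (w i j) = (k == i) || (k == j)) ->
  exists f, induced_by (subdiv_K b) (bip_graph adj) f /\ forall k, is_inA (f (inl k)).
Proof.
move=> u_inj uw.
exists (sum_map (u \o val) (fun p : subdiv_vertex b => w (val p).1 (val p).2)).
split=> //; apply: (@induced_by_bip_graph _ _ _ _
  (fun (k : 'I_b) (p : subdiv_vertex b) => (k == (val p).1) || (k == (val p).2))).
- by move=> i j /(u_inj _ _ (ltn_ord i) (ltn_ord j)) eq_ij; apply: val_inj.
- move=> [[i j] /= lt_ij] [[k l] /= lt_kl] /= eq_w; apply/val_inj => /=.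
  have in_kl (x : 'I_b) :
      (x == i :> nat) || (x == j :> nat) -> (x == k :> nat) || (x == l :> nat).
    by rewrite -!uw ?lt_ij ?lt_kl ?ltn_ord // eq_w.
  have := in_kl i; have := in_kl j; rewrite !eqxx ?orbT /= => /(_ isT) jkl /(_ isT) ikl.
  by congr pair; apply: ord_inj; lia.
- by move=> k [[i j] /= lt_ij]; rewrite uw ?lt_ij ?ltn_ord.
Qed.

Lemma half_graph_or_subdiv_of_ladder a b n (u : nat -> 'I_m) (w : nat -> nat -> B)
    col1 col2 :
  a + b < n -> {in [pred k | k < n] &, injective u} ->
  (forall k i j, k < n -> i < j < n ->
     adj (u k) (w i j) = ladder_pattern col1 col2 k i j) ->
  (exists f, induced_by (half_graph a) (bip_graph adj) f) \/
  (exists f, induced_by (subdiv_K b) (bip_graph adj) f /\ forall k, is_inA (f (inl k))).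
Proof.
move=> lt_abn u_inj uw.
(* Adjacency of u k to w i j reads k <= j, k <= i \/ k = j, i <= k <= j and
   k \in [:: i; j] for the four colour pairs. *)
case: col1 col2 uw => [] [] uw.
- left; apply: (induced_half_graph (u := fun i => u i.+1) (w := fun j => w 0 j.+1)).
  by move=> i j lt_ia lt_ja; rewrite uw /ladder_pattern /=; lia.
- left; apply: (induced_half_graph (u := u) (w := fun j => w j a)).
  by move=> i j lt_ia lt_ja; rewrite uw /ladder_pattern; case: (ltnP i j); lia.
- left; apply: (induced_half_graph (u := fun i => u (a.-1 - i)) (w := fun j => w (a.-1 - j) a)).
  move=> i j lt_ia lt_ja; rewrite uw /ladder_pattern; try lia.
  by case: (ltnP (a.-1 - i) (a.-1 - j)); lia.
- right; apply: (induced_subdiv (u := u) (w := w)) => [|k i j lt_kb /andP[lt_ij lt_jb]].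
    by apply: sub_in2 u_inj => k; rewrite !inE; lia.
  by rewrite uw /ladder_pattern ?if_same ?andbF ?orbF //; lia.
Qed.

End InducedSubgraphs.

Section BlockLadder.
Variables (m : nat) (B : finType) (adj : 'I_m -> B -> bool) (P : B -> 'I_m) (v0 : B).
Hypotheses (adj_block : forall i v, P v = i -> adj i v)
  (nadj_lower_block : forall (i j : 'I_m) v, j < i -> P v = j -> ~~ adj i v)
  (adj_upper_block : forall i j : 'I_m, i < j -> exists v, P v = j /\ adj i v).

Definition block_neighbor (i j : 'I_m) : B :=
  odflt v0 [pick v | (P v == j) && adj i v].

Lemma block_neighborP (i j : 'I_m) :
  i < j -> P (block_neighbor i j) = j /\ adj i (block_neighbor i j).
Proof.
move=> lt_ij; rewrite /block_neighbor; case: pickP => [v /andP[/eqP-> ->] //|none].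
by have [v [Pv adj_iv]] := adj_upper_block lt_ij; move: (none v); rewrite Pv eqxx adj_iv.
Qed.

Definition lower_colour (x y z : 'I_m) := adj x (block_neighbor y z).
Definition middle_colour (x y z : 'I_m) := adj y (block_neighbor x z).

Lemma adj_block_neighbor col1 col2 (S : seq 'I_m) :
  homog_triples (relpre val ltn) lower_colour col1 S ->
  homog_triples (relpre val ltn) middle_colour col2 S ->
  {in S & S & S, forall x y z : 'I_m, y < z ->
    adj x (block_neighbor y z) = ladder_pattern col1 col2 x y z}.
Proof.
move=> hom1 hom2 x y z xS yS zS lt_yz.
have [P_yz adj_yz] := block_neighborP lt_yz.
rewrite /ladder_pattern; have [lt_xz|lt_zx|/ord_inj eq_xz] := ltngtP x z.
- have [lt_xy|lt_yx|/ord_inj eq_xy] := ltngtP x y.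
  + exact: hom1.
  + exact: hom2.
  + by rewrite eq_xy.
- rewrite gtn_eqF ?(ltn_trans lt_yz) //.
  exact/negbTE/(nadj_lower_block lt_zx).
- by rewrite orbT eq_xz adj_block.
Qed.

Lemma adj_nth_block_neighbor col1 col2 i0 (S : seq 'I_m) :
  sorted (relpre val ltn) S ->
  homog_triples (relpre val ltn) lower_colour col1 S ->
  homog_triples (relpre val ltn) middle_colour col2 S ->
  forall k i j, k < size S -> i < j < size S ->
    adj (nth i0 S k) (block_neighbor (nth i0 S i) (nth i0 S j)) =
    ladder_pattern col1 col2 k i j.
Proof.
move=> sortS hom1 hom2 k i j lt_kS /andP[lt_ij lt_jS]; have lt_iS := ltn_trans lt_ij lt_jS.
have nth_mono :
    {in [pred k | k < size S] &, {mono (fun k => val (nth i0 S k)) : i j / i <= j}}.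
  exact: leq_mono_in (sorted_ltn_nth (relpre_trans ltn_trans) i0 sortS).
rewrite (adj_block_neighbor hom1 hom2) ?mem_nth ?(leqW_mono_in nth_mono) //.
exact: (ladder_pattern_mono _ _ nth_mono).
Qed.

End BlockLadder.

Theorem lemma4p11 :
  exists beta : nat -> nat -> nat,
  forall (m : nat) (B : finType) (adj : 'I_m -> B -> bool) (P : B -> 'I_m),
    (* P is a partition of B into blocks P_i := P^-1(i), all nonempty *)
    (forall i : 'I_m, exists v : B, P v = i) ->
    (* (1) P_i is contained in N(l_i) *)
    (forall (i : 'I_m) (v : B), P v = i -> adj i v) ->
    (* (2) N(l_i) meets no P_j with j < i ... *)
    (forall (i j : 'I_m) (v : B), (j < i)%N -> P v = j -> ~~ adj i v) ->
    (* ... and meets every P_j with j > i *)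
    (forall i j : 'I_m, (i < j)%N -> exists v : B, P v = j /\ adj i v) ->
    forall a b : nat, (beta a b < m)%N ->
      (exists f : 'I_a + 'I_a -> 'I_m + B,
          induced_by (half_graph a) (bip_graph adj) f)
      \/
      (exists f : 'I_b + subdiv_vertex b -> 'I_m + B,
          induced_by (subdiv_K b) (bip_graph adj) f /\
          forall i : 'I_b, is_inA (f (inl i))).
Proof.
exists (fun a b => ramsey3_bound (ramsey3_bound (a + b).+1.*2).*2).
move=> m B adj P P_nonempty adj_block nadj_lower adj_upper a b lt_bound_m.
pose i0 := Ordinal (leq_ltn_trans (leq0n _) lt_bound_m).
have [v0 _] := P_nonempty i0.
have lt_irr : irreflexive (relpre val ltn : rel 'I_m) := fun i => ltnn i.
have lt_trans : transitive (relpre val ltn : rel 'I_m) := relpre_trans ltn_trans.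
have sorted_enum : sorted (relpre val ltn) (enum 'I_m).
  by rewrite -sorted_map val_enum_ord iota_ltn_sorted.
have [S1 [col1 [sub1 size1 hom1]]] :=
  ramsey_triples_diag (k := ramsey3_bound (a + b).+1.*2) lt_irr lt_trans
    (lower_colour adj P v0) sorted_enum ltac:(by rewrite size_enum_ord ltnW).
have [S [col2 [subS sizeS hom2]]] :=
  ramsey_triples_diag lt_irr lt_trans (middle_colour adj P v0)
    (subseq_sorted lt_trans sub1 sorted_enum) size1.
have sortS := subseq_sorted lt_trans (subseq_trans subS sub1) sorted_enum.
apply: (half_graph_or_subdiv_of_ladder (n := size S) (u := nth i0 S)
  (w := fun i j => block_neighbor adj P v0 (nth i0 S i) (nth i0 S j))
  (col1 := col1) (col2 := col2)) => //.
- move=> i j lt_iS lt_jS /eqP.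
  by rewrite nth_uniq ?(sorted_uniq lt_trans lt_irr sortS) // => /eqP.
- exact: (adj_nth_block_neighbor adj_block nadj_lower adj_upper i0 sortS
    (homog_triples_subseq subS hom1) hom2).
Qed.
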